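(* Let $\mathcal H$ be a finite-dimensional Hilbert space, $\mathcal D$ the set of density operators on $\mathcal H$, and consider the two-time-scale Lindblad equation $\frac{d\rho}{dt} = (\mathcal L_0 + \epsilon \mathcal L_1)\rho$, where $\mathcal L_0$ is a Lindblad super-operator and $\epsilon>0$ is small. Assume that for $\epsilon=0$ the dynamics converge to a stationary regime, i.e. the limit $U_0\rho := \lim_{t\to\infty} e^{t\mathcal L_0}\rho$ exists for all $\rho\in\mathcal D$, and write it in Kraus form $U_0\rho = \sum_\mu M_\mu \rho M_\mu^\dagger$ with $\sum_\mu M_\mu^\dagger M_\mu = \mathbb I_{\mathcal H}$. Assume that the set of steady states $\mathcal D_0 = \{\rho\in\mathcal D : \mathcal L_0\rho = 0\}$ coincides with the set of density operators supported on a subspace $\mathcal H_0\subseteq\mathcal H$. Let $\{|n\rangle\}_{n=1}^{\dim\mathcal H_0}$ be an orthonormal basis of $\mathcal H_0$, $P_n = |n\rangle\langle n|$, $P_0=\sum_n P_n$, and assume $$\mathcal L_1\rho = \sum_{n=1}^{\dim \mathcal H_0}\Big(P_n\rho P_n^\dagger - \tfrac12 P_n^\dagger P_n\rho - \tfrac12 \rho P_n^\dagger P_n\Big).$$ Then the first-order (in $\epsilon$) effective dynamics of $\rho_e\in\mathcal D_0$ obtained by adiabatic elimination — i.e. $\frac{d\rho_e}{dt} = (\mathcal L_{e,0}+\epsilon\mathcal L_{e,1})\rho_e + O(\epsilon^2)$, where $\mathcal L_{e,0}=0$ and $\mathcal L_{e,1}\rho_e = K_0\big(U_0\mathcal L_1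 K_0(\rho_e)\big)$ with $K_0(\rho)=P_0\rho P_0$ — is the Lindblad equation $$\frac{d\rho_e}{dt} = \epsilon\sum_{n,m=1}^{\dim\mathcal H_0}\kappa_{nm}\Big(R_{nm}\rho_e R_{nm}^\dagger - \tfrac12 R_{nm}^\dagger R_{nm}\rho_e - \tfrac12\rho_e R_{nm}^\dagger R_{nm}\Big),$$ where $R_{nm} = |n\rangle\langle m|$ and $\kappa_{nm} = \sum_\mu |\langle n|M_\mu|m\rangle|^2$.
   Context: A Lindblad super-operator has the form $\mathcal L\rho = -i[H,\rho]+\sum_k D_{R_k}[\rho]$ with $H$ Hermitian and dissipator $D_R[\rho] = R\rho R^\dagger - \tfrac12(R^\dagger R\rho+\rho R^\dagger R)$. The adiabatic elimination framework: one seeks a map $\rho = K(\rho_e)=\sum_{m\ge0}\epsilon^m K_m(\rho_e)$ and an effective generator $\mathcal L_e = \mathcal L_{e,0}+\epsilon\mathcal L_{e,1}+O(\epsilon^2)$ with $(\mathcal L_0+\epsilon\mathcal L_1)K(\rho_e) = K(\mathcal L_e\rho_e)$, where $K_0$ is the projection onto $\mathcal D_0$ given by $K_0(\rho)=P_0\rho P_0$. *)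

From HB Require Import structures.
From mathcomp Require Import all_boot all_order all_algebra.
From mathcomp Require Import all_classical all_reals all_analysis.
From mathcomp Require Import complex.
Set Implicit Arguments. Unset Strict Implicit. Unset Printing Implicit Defensive.
Import Order.TTheory GRing.Theory Num.Theory.
Import numFieldNormedType.Exports.
Local Open Scope ring_scope.
Local Open Scope complex_scope.
Local Open Scope classical_set_scope.

Section Quantum.
Variable R : realType.
Local Notation C := R[i].

Definition dag m n (A : 'M[C]_(m, n)) : 'M[C]_(n, m) := (map_mx (@conjc R) A)^T.

Definition commut d (A B : 'M[C]_d) : 'M[C]_d := A *m B - B *m A.

Definition dissip d (Rk rho : 'M[C]_d) : 'M[C]_d :=
  Rk *m rho *m dag Rk - 2^-1 *: (dag Rk *m Rk *m rho + rho *m (dag Rk *m Rk)).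

Definition is_lindblad d (L : 'M[C]_d -> 'M[C]_d) : Prop :=
  exists (H : 'M[C]_d) (Rs : seq 'M[C]_d),
    dag H = H /\
    forall rho, L rho = - ('i *: commut H rho) + \sum_(Rk <- Rs) dissip Rk rho.

Definition density d (rho : 'M[C]_d) : Prop :=
  [/\ dag rho = rho,
      (forall v : 'cV[C]_d, 0 <= (dag v *m rho *m v) 0 0) &
      \tr rho = 1].

(* rho is supported on the subspace spanned by the columns of E,
   i.e. the range of rho is contained in that subspace *)
Definition supported_on d d0 (E : 'M[C]_(d, d0)) (rho : 'M[C]_d) : Prop :=
  exists X : 'M[C]_(d0, d), rho = E *m X.

Definition orthonormal_vecs d d0 (e : 'I_d0 -> 'cV[C]_d) : Prop :=
  forall n m, (dag (e n) *m e m) 0 0 = (n == m)%:R.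

Definition basis_mx d d0 (e : 'I_d0 -> 'cV[C]_d) : 'M[C]_(d, d0) :=
  \matrix_(i, n) e n i 0.

Definition ketbra d (u v : 'cV[C]_d) : 'M[C]_d := u *m dag v.

(* exp(t L) rho, defined entrywise as the sum of the exponential series
   sum_k t^k/k! L^k rho (real and imaginary parts separately) *)
Definition exp_partial d (L : 'M[C]_d -> 'M[C]_d) (t : R) (rho : 'M[C]_d) (N : nat)
  : 'M[C]_d :=
  \sum_(k < N) ((t ^+ k / (k`!)%:R)%:C *: iter k L rho).

Definition semigroup d (L : 'M[C]_d -> 'M[C]_d) (t : R) (rho : 'M[C]_d) : 'M[C]_d :=
  \matrix_(i, j)
    (lim ((fun N => complex.Re (exp_partial L t rho N i j)) @ \oo) +i*
     lim ((fun N => complex.Im (exp_partial L t rho N i j)) @ \oo)).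

Definition cvg_pinfty (f : R -> C) (z : C) : Prop :=
  ((fun t => complex.Re (f t)) @ +oo --> complex.Re z) /\ ((fun t => complex.Im (f t)) @ +oo --> complex.Im z).

Definition kraus d k (M : 'I_k -> 'M[C]_d) (rho : 'M[C]_d) : 'M[C]_d :=
  \sum_(mu < k) M mu *m rho *m dag (M mu).

Definition projn d d0 (e : 'I_d0 -> 'cV[C]_d) (n : 'I_d0) : 'M[C]_d := ketbra (e n) (e n).
Definition proj0 d d0 (e : 'I_d0 -> 'cV[C]_d) : 'M[C]_d := \sum_(n < d0) projn e n.

Definition K0 d d0 (e : 'I_d0 -> 'cV[C]_d) (rho : 'M[C]_d) : 'M[C]_d :=
  proj0 e *m rho *m proj0 e.

Definition L1 d d0 (e : 'I_d0 -> 'cV[C]_d) (rho : 'M[C]_d) : 'M[C]_d :=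
  \sum_(n < d0) dissip (projn e n) rho.

Definition Le1 d d0 k (e : 'I_d0 -> 'cV[C]_d) (M : 'I_k -> 'M[C]_d) (rho : 'M[C]_d)
  : 'M[C]_d := K0 e (kraus M (L1 e (K0 e rho))).

Definition kappa d d0 k (e : 'I_d0 -> 'cV[C]_d) (M : 'I_k -> 'M[C]_d) (n m : 'I_d0) : C :=
  \sum_(mu < k) `|(dag (e n) *m M mu *m e m) 0 0| ^+ 2.

End Quantum.

From HB Require Import structures.
From mathcomp Require Import all_boot all_order all_algebra.
From mathcomp Require Import all_classical all_reals all_analysis.
From mathcomp Require Import complex.
Import Order.TTheory GRing.Theory Num.Theory.
Import numFieldNormedType.Exports.
Local Open Scope ring_scope.
Local Open Scope complex_scope.
Set Implicit Arguments. Unset Strict Implicit.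

(* The key observation is that U_0 fixes every steady state of L_0: on a
   steady state rho the exponential series of t L_0 is constantly rho, so
   its limit U_0 rho = sum_mu M_mu rho M_mu^dag equals rho.  Each projector
   P_n = |n><n| is a density operator supported on H_0, hence a steady state,
   hence fixed by U_0.  Two consequences follow:
   - kappa_{nm} = <n| U_0(P_m) |n> = <n|P_m|n> = delta_{nm}, so the claimed
     right-hand side collapses to sum_n D_{P_n}[rho_e] = L_1 rho_e;
   - for a steady state rho_e (so P_0 rho_e = rho_e = rho_e P_0),
     L_1 rho_e = sum_n <n|rho_e|n> P_n - rho_e is a linear combination of
     steady states, hence fixed by the linear maps U_0 and K_0.
   Therefore L_{e,1} rho_e = K_0 (U_0 (L_1 (K_0 rho_e))) = L_1 rho_e. *)

Section Adjoint.
Variable R : realType.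
Local Notation C := R[i].

Lemma dag_mul m n p (A : 'M[C]_(m, n)) (B : 'M[C]_(n, p)) :
  dag (A *m B) = dag B *m dag A.
Proof. by rewrite /dag map_mxM trmx_mul. Qed.

Lemma dagK m n (A : 'M[C]_(m, n)) : dag (dag A) = A.
Proof. by apply/matrixP=> i j; rewrite !mxE conjcK. Qed.

Lemma dag_sum m n I (r : seq I) (P : pred I) (F : I -> 'M[C]_(m, n)) :
  dag (\sum_(x <- r | P x) F x) = \sum_(x <- r | P x) dag (F x).
Proof.
apply/matrixP=> i j; rewrite !mxE summxE rmorph_sum summxE.
by apply: eq_bigr=> x _; rewrite !mxE.
Qed.

Lemma dag11 (A : 'M[C]_1) : dag A 0 0 = (A 0 0)^*.
Proof. by rewrite !mxE. Qed.

Lemma mul11 (A B : 'M[C]_1) : (A *m B) 0 0 = A 0 0 * B 0 0.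
Proof. by rewrite mxE big_ord1. Qed.

Lemma hermitian_mulr d (P A : 'M[C]_d) :
  dag P = P -> dag A = A -> P *m A = A -> A *m P = A.
Proof. by move=> hP hA hPA; rewrite -[LHS]dagK dag_mul hP hA hPA. Qed.

End Adjoint.

Section Projectors.
Variables (R : realType) (d d0 : nat) (e : 'I_d0 -> 'cV[R[i]]_d).
Hypothesis He : orthonormal_vecs e.
Local Notation C := R[i].

Lemma inner_e n m : dag (e n) *m e m = (n == m)%:R%:M.
Proof. by rewrite [LHS]mx11_scalar He. Qed.

Lemma projn_e n m : projn e n *m e m = (n == m)%:R *: e n.
Proof. by rewrite /projn /ketbra -mulmxA inner_e mul_mx_scalar. Qed.

Lemma proj0_e m : proj0 e *m e m = e m.
Proof.
rewrite /proj0 mulmx_suml (bigD1 m) //= projn_e eqxx scale1r.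
by rewrite big1 ?addr0 // => n /negbTE hn; rewrite projn_e hn scale0r.
Qed.

Lemma proj0_basis : proj0 e *m basis_mx e = basis_mx e.
Proof.
apply/matrixP=> i n; have := congr1 (fun A : 'cV_d => A i 0) (proj0_e n).
by rewrite /= !mxE => <-; apply: eq_bigr => j _; rewrite !mxE.
Qed.

Lemma dag_projn n : dag (projn e n) = projn e n.
Proof. by rewrite /projn /ketbra dag_mul dagK. Qed.

Lemma dag_proj0 : dag (proj0 e) = proj0 e.
Proof. by rewrite /proj0 dag_sum; apply: eq_bigr => n _; rewrite dag_projn. Qed.

Lemma proj0_projn n : proj0 e *m projn e n = projn e n.
Proof. by rewrite {1}/projn /ketbra mulmxA proj0_e. Qed.

Lemma projn_proj0 n : projn e n *m proj0 e = projn e n.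
Proof. exact: hermitian_mulr (dag_proj0) (dag_projn n) (proj0_projn n). Qed.

Lemma projn_idem n : projn e n *m projn e n = projn e n.
Proof.
rewrite {1}/projn /ketbra -!mulmxA [dag (e n) *m _]mulmxA.
by rewrite inner_e eqxx mul_scalar_mx scale1r.
Qed.

Lemma projn_sandwich n (A : 'M[C]_d) :
  projn e n *m A *m projn e n = (dag (e n) *m A *m e n) 0 0 *: projn e n.
Proof.
rewrite /projn /ketbra.
have -> : e n *m dag (e n) *m A *m (e n *m dag (e n)) =
  e n *m (dag (e n) *m A *m e n) *m dag (e n) by rewrite !mulmxA.
by rewrite [X in e n *m X]mx11_scalar mul_mx_scalar scalemxAl.
Qed.

Lemma projn_density n : density (projn e n).
Proof.
split; first exact: dag_projn.
  move=> v; rewrite /projn /ketbra !mulmxA -mulmxA mul11.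
  have -> : (dag (e n) *m v) 0 0 = ((dag v *m e n) 0 0)^*.
    by rewrite -dag11 dag_mul dagK.
  exact: mulcJ_ge0.
by rewrite /projn /ketbra mxtrace_mulC inner_e eqxx mxtrace_scalar.
Qed.

Lemma projn_supported n : supported_on (basis_mx e) (projn e n).
Proof.
exists (delta_mx n 0 *m dag (e n)); rewrite mulmxA -colE.
by congr (_ *m _); apply/matrixP=> i j; rewrite !mxE ord1.
Qed.

Lemma supported_proj0 (A : 'M[C]_d) :
  dag A = A -> supported_on (basis_mx e) A ->
  proj0 e *m A = A /\ A *m proj0 e = A.
Proof.
move=> hA [X defA]; have hl : proj0 e *m A = A by rewrite defA mulmxA proj0_basis.
by split=> //; apply: hermitian_mulr dag_proj0 hA hl.
Qed.

Lemma L1_on_H0 (A : 'M[C]_d) :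
  proj0 e *m A = A -> A *m proj0 e = A ->
  L1 e A = \sum_(n < d0) (dag (e n) *m A *m e n) 0 0 *: projn e n - A.
Proof.
move=> hl hr; rewrite /L1 /dissip.
under eq_bigr do rewrite dag_projn projn_idem projn_sandwich scalerDr.
rewrite sumrB; congr (_ - _).
rewrite big_split /= -!scaler_sumr -mulmx_suml -mulmx_sumr -/(proj0 e) hl hr.
have half : (2^-1 + 2^-1 : C) = 1 by rewrite [RHS](splitr 1) mul1r.
by rewrite -scalerDr scalerDr -scalerDl half scale1r.
Qed.

End Projectors.

Section Kraus.
Variables (R : realType) (d k : nat) (M : 'I_k -> 'M[R[i]]_d).
Local Notation C := R[i].

(* A Kraus map is linear, so its fixed points form a subspace. *)
Fact kraus_is_linear : linear (kraus M).
Proof.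
move=> a A B; rewrite /kraus scaler_sumr -big_split; apply: eq_bigr => mu _.
by rewrite mulmxDr mulmxDl -scalemxAr -scalemxAl.
Qed.

HB.instance Definition _ :=
  GRing.isLinear.Build C 'M[C]_d 'M[C]_d _ (kraus M) kraus_is_linear.

(* kappa_{nm} = <n| U_0(P_m) |n>; hence kappa = delta when U_0 fixes each P_m. *)
Lemma kappa_delta d0 (e : 'I_d0 -> 'cV[C]_d) n m :
  orthonormal_vecs e -> kraus M (projn e m) = projn e m ->
  kappa e M n m = (n == m)%:R.
Proof.
move=> He hK; rewrite /kappa.
rewrite (eq_bigr (fun mu =>
  (dag (e n) *m (M mu *m projn e m *m dag (M mu)) *m e n) 0 0)); last first.
  move=> mu _; rewrite sqr_normc -dag11 !dag_mul dagK -mul11 /projn /ketbra.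
  by rewrite !mulmxA.
rewrite -summxE -mulmx_suml -mulmx_sumr -/(kraus M (projn e m)) hK.
rewrite -mulmxA projn_e // -scalemxAr mxE inner_e // mxE eqxx mulr1n.
by rewrite eq_sym; case: (n == m); rewrite ?mulr1 ?mulr0.
Qed.

End Kraus.

Section Compression.
Variables (R : realType) (d d0 : nat) (e : 'I_d0 -> 'cV[R[i]]_d).
Local Notation C := R[i].

Fact K0_is_linear : linear (K0 e).
Proof.
by move=> a A B; rewrite /K0 mulmxDr mulmxDl -scalemxAr -scalemxAl.
Qed.

HB.instance Definition _ :=
  GRing.isLinear.Build C 'M[C]_d 'M[C]_d _ (K0 e) K0_is_linear.

End Compression.

Lemma linear_fix_comb (K : pzRingType) (V : lmodType K) (f : {linear V -> V})
    n (c : 'I_n -> K) (F : 'I_n -> V) (A : V) :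
  (forall i, f (F i) = F i) -> f A = A ->
  f (\sum_(i < n) c i *: F i - A) = \sum_(i < n) c i *: F i - A.
Proof.
move=> hF hA; rewrite linearB linear_sum hA; congr (_ - _).
by apply: eq_bigr => i _; rewrite linearZ hF.
Qed.

Section Stationary.
Variables (R : realType) (d : nat) (L : 'M[R[i]]_d -> 'M[R[i]]_d).

Lemma lindblad0 : is_lindblad L -> L 0 = 0.
Proof.
case=> H [Rs [_ ->]]; rewrite /commut mulmx0 mul0mx subrr scaler0 oppr0 add0r.
by rewrite big1 // => Rk _; rewrite /dissip !mulmx0 !mul0mx addr0 scaler0 subrr.
Qed.

Lemma exp_partial_stationary t rho N :
  L 0 = 0 -> L rho = 0 -> exp_partial L t rho N.+1 = rho.
Proof.
move=> L_zero Lrho; rewrite /exp_partial big_ord_recl /= big1 ?addr0.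
  by rewrite expr0 fact0 divr1 scale1r.
move=> j _; rewrite [X in _ *: X](_ : _ = 0) ?scaler0 //.
by rewrite add0n; elim: (nat_of_ord j) => [|n IH] /=; rewrite ?IH.
Qed.

Lemma semigroup_stationary t rho :
  L 0 = 0 -> L rho = 0 -> semigroup L t rho = rho.
Proof.
move=> L_zero Lrho; apply/matrixP=> i j; rewrite mxE.
have ev : \forall N \near eventually, exp_partial L t rho N i j = rho i j.
  by exists 1%N => // N /= hN; rewrite -(prednK hN) exp_partial_stationary.
rewrite (@lim_near_cst _ (@Rhausdorff R) _ _ _ (complex.Re (rho i j))).
  rewrite (@lim_near_cst _ (@Rhausdorff R) _ _ _ (complex.Im (rho i j))).
    by case: (rho i j).
  by near=> N; rewrite (near ev N).
by near=> N; rewrite (near ev N).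
Unshelve. all: by end_near.
Qed.

End Stationary.

Lemma cvg_pinfty_cst (R : realType) (c z : R[i]) :
  cvg_pinfty (fun _ : R => c) z -> c = z.
Proof.
case=> hRe hIm; have := cvg_lim (@Rhausdorff R) hRe.
have := cvg_lim (@Rhausdorff R) hIm.
rewrite !lim_cst; try exact: Rhausdorff.
by move=> eIm eRe; apply/eqP; rewrite eq_complex eRe eIm !eqxx.
Qed.

Lemma kraus_fixes_steady (R : realType) d k (L0 : 'M[R[i]]_d -> 'M[R[i]]_d)
    (M : 'I_k -> 'M[R[i]]_d) rho :
  is_lindblad L0 ->
  (forall rho, density rho ->
     forall i j, cvg_pinfty (fun t => semigroup L0 t rho i j) (kraus M rho i j)) ->
  density rho -> L0 rho = 0 -> kraus M rho = rho.
Proof.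
move=> HL HU Hd Hst; apply/matrixP=> i j; apply/esym/cvg_pinfty_cst.
have orbit_cst : (fun t => semigroup L0 t rho i j) = fun _ => rho i j.
  by apply: funext => t; rewrite semigroup_stationary // lindblad0.
by rewrite -orbit_cst; apply: HU.
Qed.

Theorem proposition1 (R : realType) (d d0 k : nat)
    (L0 : 'M[R[i]]_d -> 'M[R[i]]_d)
    (e : 'I_d0 -> 'cV[R[i]]_d)
    (M : 'I_k -> 'M[R[i]]_d) :
  is_lindblad L0 ->
  orthonormal_vecs e ->
  (* Kraus normalization sum_mu M_mu^dag M_mu = I *)
  \sum_(mu < k) dag (M mu) *m M mu = 1%:M ->
  (* U_0 rho := lim_{t -> oo} e^{t L_0} rho exists and equals sum_mu M_mu rho M_mu^dag *)
  (forall rho, density rho ->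
     forall i j, cvg_pinfty (fun t => semigroup L0 t rho i j) (kraus M rho i j)) ->
  (* D_0 = { rho in D : L_0 rho = 0 } is the set of density operators supported on H_0 *)
  (forall rho, density rho -> (L0 rho = 0 <-> supported_on (basis_mx e) rho)) ->
  forall rhoe, density rhoe -> L0 rhoe = 0 ->
    Le1 e M rhoe =
    \sum_(n < d0) \sum_(m < d0)
       kappa e M n m *: dissip (ketbra (e n) (e m)) rhoe.
Proof.
move=> HL He _ HU HD rho Hd Hst.
have U0_Pn n : kraus M (projn e n) = projn e n.
  apply: kraus_fixes_steady HL HU (projn_density He n) _.
  exact/(HD _ (projn_density He n))/projn_supported.
have U0_rho : kraus M rho = rho := kraus_fixes_steady HL HU Hd Hst.
have [P0rho rhoP0] : proj0 e *m rho = rho /\ rho *m proj0 e = rho.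
  by case: (Hd) => herm _ _; apply: supported_proj0 => //; apply/(HD rho Hd).
have K0_rho : K0 e rho = rho by rewrite /K0 P0rho rhoP0.
have K0_Pn n : K0 e (projn e n) = projn e n.
  by rewrite /K0 proj0_projn // projn_proj0.
(* kappa = delta: the right-hand side is L_1 rho. *)
have -> : \sum_(n < d0) \sum_(m < d0) kappa e M n m *: dissip (ketbra (e n) (e m)) rho
    = L1 e rho.
  apply: eq_bigr => n _; rewrite (bigD1 n) //= kappa_delta // eqxx scale1r.
  by rewrite big1 ?addr0 // => m /negbTE hm; rewrite kappa_delta // eq_sym hm scale0r.
(* L_1 rho is a combination of steady states, fixed by U_0 and K_0. *)
rewrite /Le1 K0_rho L1_on_H0 //.
rewrite (@linear_fix_comb R[i] 'M[R[i]]_d (kraus M)) //.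
by rewrite (@linear_fix_comb R[i] 'M[R[i]]_d (K0 e)).
Qed.
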